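(* For every $t>0$, the limit $\lim_{n\to\infty}\frac1n\log\mathbb{E}\big(e^{tH_n}\big)$ exists.
   Context: Standing setup (discrete-time Hawkes process, DTHP). Let $(a_i)_{i=0}^\infty$ be a sequence of strictly positive real numbers with $\sum_{i=0}^\infty a_i<1$ and $\sum_{i=1}^\infty i\,a_i<\infty$. The arrival process $\{\xi_n\}_{n\ge1}$ is a sequence of $\{0,1\}$-valued random variables on a probability space $(\Omega,\mathcal F,\mathbb P)$ with $\mathbb{P}(\xi_1=1)=a_0$, $\mathbb P(\xi_1=0)=1-a_0$, and for $n\ge2$, $$\mathbb{P}(\xi_n=1\mid \xi_1,\dots,\xi_{n-1})=a_0+\sum_{i=1}^{n-1}a_{n-i}\xi_i,\qquad \mathbb{P}(\xi_n=0\mid \xi_1,\dots,\xi_{n-1})=1-\Big(a_0+\sum_{i=1}^{n-1}a_{n-i}\xi_i\Big).$$ The DTHP is $H_n=\sum_{i=1}^n\xi_i$, and $\mathcal F_n=\sigma(\xi_1,\dots,\xi_n)$. *)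

From HB Require Import structures.
From mathcomp Require Import all_boot all_order all_algebra.
From mathcomp Require Import all_classical all_reals all_analysis.
Set Implicit Arguments. Unset Strict Implicit. Unset Printing Implicit Defensive.
Import Order.TTheory GRing.Theory Num.Theory numFieldNormedType.Exports.
Local Open Scope ring_scope.

(* Discrete-time Hawkes process with kernel (a_i)_{i>=0}.
   A sample path of (xi_1, ..., xi_n) is encoded as x : n.-tuple bool,
   with tnth x k = xi_{k+1} (0-based index k). *)

(* Conditional intensity at time k+1 given the past:
   P(xi_{k+1} = 1 | xi_1..xi_k) = a_0 + sum_{i=1}^{k} a_{k+1-i} xi_i.
   In 0-based indices (time i+1 <-> index i, i < k): a (k - i). *)
Definition dthp_intensity (R : realType) (a : nat -> R) (n : nat)
    (x : n.-tuple bool) (k : 'I_n) : R :=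
  a 0%N + \sum_(i < n | (i < k)%N) a (k - i)%N * (tnth x i)%:R.

(* Joint law of (xi_1, ..., xi_n): P(xi_1 = x_1, ..., xi_n = x_n), the product
   of the successive conditional probabilities (chain rule). *)
Definition dthp_pathprob (R : realType) (a : nat -> R) (n : nat)
    (x : n.-tuple bool) : R :=
  \prod_(k < n) (if tnth x k then dthp_intensity a x k
                 else 1 - dthp_intensity a x k).

Definition dthp_H (R : realType) (n : nat) (x : n.-tuple bool) : R :=
  \sum_(i < n) (tnth x i)%:R.

Definition dthp_mgf (R : realType) (a : nat -> R) (n : nat) (t : R) : R :=
  \sum_(x : n.-tuple bool) dthp_pathprob a x * expR (t * dthp_H R x).

(* Conditioning on the first step, E(exp(t H_n)) obeys a recursion in which the
   intensity baseline is shifted by the kernel; along this recursion the mgf is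
   increasing in the baseline (for t >= 0 an early event raises all later
   intensities). Since after n steps the baseline is still at least a_0, the
   mgf is supermultiplicative in n, so log E(exp(t H_n)) is superadditive,
   nonnegative and at most t n, and Fekete's lemma gives the limit. *)

From HB Require Import structures.
From mathcomp Require Import all_boot all_order all_algebra.
From mathcomp Require Import all_classical all_reals all_analysis.
From mathcomp Require Import ring lra.
Import Order.TTheory GRing.Theory Num.Theory numFieldNormedType.Exports.
Set Implicit Arguments. Unset Strict Implicit. Unset Printing Implicit Defensive.
Local Open Scope ring_scope.

Lemma ler_convex_comb (R : realDomainType) (p x y x' y' : R) :
  0 <= p <= 1 -> x <= x' -> y <= y' -> p * x + (1 - p) * y <= p * x' + (1 - p) * y'.
Proof. by move=> /andP[p_ge0 p_le1] le_x le_y; nra. Qed.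

Lemma ler_convex_comb_weight (R : realDomainType) (p q x y : R) :
  p <= q -> y <= x -> p * x + (1 - p) * y <= q * x + (1 - q) * y.
Proof. by move=> le_pq le_yx; nra. Qed.

Section Fekete.
Variables (R : realType) (f : nat -> R) (C : R).
Hypothesis f_superadditive : forall n m, f n + f m <= f (n + m).
Hypothesis f_ge0 : forall n, 0 <= f n.
Hypothesis f_le_linear : forall n, f n <= C * n%:R.

Lemma superadditive_natmul q N : q%:R * f N <= f (q * N)%N.
Proof.
elim: q => [|q IH]; first by rewrite mul0r.
rewrite mulSn -nat1r mulrDl mul1r; apply: le_trans (f_superadditive _ _).
by rewrite lerD2l.
Qed.

Lemma superadditive_lower_bound N n : (0 < N)%N ->
  n%:R * (N%:R^-1 * f N) - N%:R * C <= f n.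
Proof.
move=> N_gt0; have N0 : 0 < N%:R :> R by rewrite ltr0n.
have fq_le : f (n %/ N * N)%N <= f n.
  rewrite [in X in _ <= f X](divn_eq n N); apply: le_trans (f_superadditive _ _).
  by rewrite lerDl.
have n_le : n%:R <= (n %/ N)%:R * N%:R + N%:R :> R.
  rewrite -natrM -natrD ler_nat {1}(divn_eq n N) leq_add2l.
  exact/ltnW/ltn_pmod.
have fN_le : f N <= C * N%:R := f_le_linear N.
have := @superadditive_natmul (n %/ N) N.
set v := N%:R^-1 * f N.
have fN : f N = N%:R * v by rewrite /v mulrA divff ?mul1r ?lt0r_neq0.
rewrite fN in fN_le * => fq_ge.
have v_le : v <= C by rewrite -(ler_pM2l N0) -fN mulrC.
have v_ge0 : 0 <= v by rewrite mulr_ge0 ?invr_ge0.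
have := ler_wpM2r v_ge0 n_le.
nra.
Qed.

Lemma superadditive_cvgn : cvgn (fun n => n%:R^-1 * f n).
Proof.
pose S := [set (n.+1)%:R^-1 * f n.+1 | n in [set: nat]]%classic.
have S_sup : has_sup S.
  split; first by exists (1%:R^-1 * f 1%N), 0%N.
  by exists C => _ [n _ <-]; rewrite ler_pdivrMl ?ltr0n // mulrC.
apply/cvg_ex; exists (sup S); apply/cvgrPdist_le => e e_gt0.
have [_ [N _ <-] supS_lt] := sup_adherent (divr_gt0 e_gt0 (ltr0n R 2)) S_sup.
set v := N.+1%:R^-1 * f N.+1 in supS_lt.
near=> n.
have n_gt0 : (0 < n)%N by near: n; exact: nbhs_infty_gt.
have n_ge : 2 * N.+1%:R * C / e <= n%:R :> R by near: n; exact: nbhs_infty_ger.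
have n0 : 0 < n%:R :> R by rewrite ltr0n.
have le_supS : n%:R^-1 * f n <= sup S.
  by apply: sup_upper_bound => //; exists n.-1; rewrite ?prednK.
rewrite ger0_norm ?subr_ge0 // lerBlDr -lerBlDl ler_pdivlMl //.
have lb : n%:R * v - N.+1%:R * C <= f n :=
  @superadditive_lower_bound N.+1 n (ltn0Sn N).
have NC_le : N.+1%:R * C <= n%:R * (e / 2).
  by have := ler_wpM2r (ltW e_gt0) n_ge; rewrite divfK ?gt_eqF //; nra.
have := ler_wpM2l (ltW n0) (ltW supS_lt).
have -> : n%:R * (sup S - e) = n%:R * (sup S - e / 2) - n%:R * (e / 2) by field.
lra.
Unshelve. all: end_near.
Qed.

End Fekete.

Lemma sum_tuple_bool_cons (V : nmodType) n (F : n.+1.-tuple bool -> V) :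
  \sum_(x : n.+1.-tuple bool) F x =
  \sum_(x : n.-tuple bool) F [tuple of true :: x] +
  \sum_(x : n.-tuple bool) F [tuple of false :: x].
Proof.
rewrite (reindex (fun p : bool * n.-tuple bool => [tuple of p.1 :: p.2])) /=.
  by rewrite -(pair_bigA _ (fun c (x : n.-tuple bool) => F [tuple of c :: x])) big_bool.
exists (fun x => (thead x, [tuple of behead x])) => [[c x]|x] _ /=.
  by rewrite theadE; congr pair; apply: val_inj.
by apply: val_inj; rewrite [in RHS](tuple_eta x).
Qed.

Section DTHPFromBase.
Variables (R : realType) (a : nat -> R).

(* [b k] plays the role of [a 0] plus the excitation at time [k] due to events
   before time 0; after a first step [c], the rest of the path is a process of the
   same kind with base [shift_base b c]. *)
Definition dthp_intensity_from (b : nat -> R) n (x : n.-tuple bool) (k : 'I_n) : R :=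
  b k + \sum_(i < n | (i < k)%N) a (k - i)%N * (tnth x i)%:R.

Definition dthp_pathprob_from (b : nat -> R) n (x : n.-tuple bool) : R :=
  \prod_(k < n) (if tnth x k then dthp_intensity_from b x k
                 else 1 - dthp_intensity_from b x k).

Definition dthp_mgf_from (t : R) (b : nat -> R) n : R :=
  \sum_(x : n.-tuple bool) dthp_pathprob_from b x * expR (t * dthp_H R x).

Definition shift_base (b : nat -> R) (c : bool) (k : nat) : R :=
  b k.+1 + a k.+1 * c%:R.

Fixpoint dthp_mgf_rec (t : R) n (b : nat -> R) : R :=
  if n is m.+1 then
    b 0%N * expR t * dthp_mgf_rec t m (shift_base b true)
    + (1 - b 0%N) * dthp_mgf_rec t m (shift_base b false)
  else 1.

Lemma dthp_intensity_from_cons0 b n c (x : n.-tuple bool) :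
  dthp_intensity_from b [tuple of c :: x] ord0 = b 0%N.
Proof. by rewrite /dthp_intensity_from big_pred0 ?addr0. Qed.

Lemma dthp_intensity_from_consS b n c (x : n.-tuple bool) (k : 'I_n) :
  dthp_intensity_from b [tuple of c :: x] (lift ord0 k) =
  dthp_intensity_from (shift_base b c) x k.
Proof.
rewrite /dthp_intensity_from /shift_base lift0 big_mkcond big_ord_recl /=.
rewrite tnth0 subn0 -addrA [X in _ = _ + (_ + X)]big_mkcond; congr (_ + (_ + _)).
by apply: eq_bigr => i _; rewrite ltnS tnthS subSS.
Qed.

Lemma dthp_mgf_fromS t b n :
  dthp_mgf_from t b n.+1 =
  b 0%N * expR t * dthp_mgf_from t (shift_base b true) n
  + (1 - b 0%N) * dthp_mgf_from t (shift_base b false) n.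
Proof.
rewrite /dthp_mgf_from sum_tuple_bool_cons !mulr_sumr.
congr (_ + _); apply: eq_bigr => x _;
  rewrite /dthp_pathprob_from /dthp_H !big_ord_recl !tnth0 dthp_intensity_from_cons0 /=;
  under eq_bigr do rewrite tnthS dthp_intensity_from_consS;
  under [X in expR (t * (_ + X))]eq_bigr do rewrite tnthS.
  by rewrite mulrDr mulr1 expRD; ring.
by rewrite add0r mulrA.
Qed.

Lemma dthp_mgf_fromE t b n : dthp_mgf_from t b n = dthp_mgf_rec t n b.
Proof.
elim: n b => [|n IH] b; last by rewrite dthp_mgf_fromS /= !IH.
rewrite /dthp_mgf_from (big_pred1 [tuple]) => [|x]; last first.
  by apply/esym/eqP; rewrite [x]tuple0.
by rewrite /dthp_pathprob_from /dthp_H !big_ord0 mulr0 expR0 mulr1.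
Qed.

End DTHPFromBase.

Section DTHPMgfBounds.
Variables (R : realType) (a : nat -> R) (t : R).
Hypotheses (a_ge0 : forall i, 0 <= a i) (t_ge0 : 0 <= t).

(* Along every path the intensity at time [k] lies between [b k] and
   [b k + \sum_(j < k) a j.+1], so this keeps it in [[a 0, 1]]. *)
Definition admissible_base (b : nat -> R) :=
  forall k, a 0%N <= b k /\ b k + \sum_(j < k) a j.+1 <= 1.

Lemma admissible_shift_base b c :
  admissible_base b -> admissible_base (shift_base a b c).
Proof.
move=> adm_b k; have [b_ge b_le] := adm_b k.+1; rewrite /shift_base; split.
  by apply: le_trans b_ge _; rewrite lerDl mulr_ge0.
apply: le_trans b_le; rewrite big_ord_recr /= -addrA lerD2l addrC lerD2l.
by case: c; rewrite ?mulr1 ?mulr0.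
Qed.

Lemma admissible_base0 b : admissible_base b -> 0 <= b 0%N <= 1.
Proof.
move=> adm_b; have [b_ge b_le] := adm_b 0%N.
by rewrite big_ord0 addr0 in b_le; rewrite b_le andbT (le_trans _ b_ge).
Qed.

Let expRt_ge1 : 1 <= expR t.
Proof. by rewrite -expR0 ler_expR. Qed.

Lemma dthp_mgf_rec_ge1 n b : admissible_base b -> 1 <= dthp_mgf_rec a t n b.
Proof.
elim: n b => [|n IH] b adm_b //=.
have ge1_true : 1 <= expR t * dthp_mgf_rec a t n (shift_base a b true).
  by rewrite -[1]mulr1 ler_pM ?expRt_ge1 ?IH //; apply: admissible_shift_base.
have ge1_false := IH _ (admissible_shift_base false adm_b).
have := ler_convex_comb (admissible_base0 adm_b) ge1_true ge1_false.
by rewrite !mulr1 subrKC mulrA.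
Qed.

Lemma dthp_mgf_rec_le_expR n b :
  admissible_base b -> dthp_mgf_rec a t n b <= expR (t * n%:R).
Proof.
elim: n b => [|n IH] b adm_b /=; first by rewrite mulr0 expR0.
rewrite -mulrA -addn1 natrD mulrDr mulr1 expRD [X in _ <= X]mulrC.
have le_true : expR t * dthp_mgf_rec a t n (shift_base a b true)
               <= expR t * expR (t * n%:R).
  by rewrite ler_wpM2l ?expR_ge0 ?IH //; apply: admissible_shift_base.
have le_false : dthp_mgf_rec a t n (shift_base a b false)
                <= expR t * expR (t * n%:R).
  apply: le_trans (IH _ (admissible_shift_base false adm_b)) _.
  by rewrite ler_peMl ?expR_ge0 ?expRt_ge1.
have := ler_convex_comb (admissible_base0 adm_b) le_true le_false.
by rewrite -mulrDl subrKC mul1r.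
Qed.

Lemma dthp_mgf_rec_le_base n b c :
  admissible_base b -> admissible_base c -> (forall k, b k <= c k) ->
  dthp_mgf_rec a t n b <= dthp_mgf_rec a t n c.
Proof.
elim: n b c => [|n IH] b c adm_b adm_c le_bc //=.
have le_shift d u v : (forall k, u k <= v k) ->
    forall k, shift_base a u d k <= shift_base a v d k.
  by move=> le_uv k; rewrite lerD2r.
have adm_shift := admissible_shift_base.
set Gbt := dthp_mgf_rec a t n (shift_base a b true).
set Gbf := dthp_mgf_rec a t n (shift_base a b false).
have le_true : Gbt <= dthp_mgf_rec a t n (shift_base a c true).
  by apply: IH; [exact: adm_shift | exact: adm_shift | exact: le_shift].
have le_false : Gbf <= dthp_mgf_rec a t n (shift_base a c false).
  by apply: IH; [exact: adm_shift | exact: adm_shift | exact: le_shift].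
(* An event at the first step raises every later intensity. *)
have false_le_true : Gbf <= expR t * Gbt.
  have Gbt_ge1 : 1 <= Gbt by apply: dthp_mgf_rec_ge1; exact: adm_shift.
  apply: (@le_trans _ _ Gbt); last by rewrite ler_peMl ?expRt_ge1 ?(le_trans ler01).
  apply: IH; [exact: adm_shift | exact: adm_shift | move=> k].
  by rewrite lerD2l ler_wpM2l ?ler_nat.
rewrite -!mulrA; apply: le_trans (ler_convex_comb_weight (le_bc 0%N) false_le_true) _.
apply: ler_convex_comb; first exact: admissible_base0.
  by rewrite ler_wpM2l ?expR_ge0.
exact: le_false.
Qed.

Lemma dthp_mgf_rec_supermul n m b :
  admissible_base (fun=> a 0%N) -> admissible_base b ->
  dthp_mgf_rec a t n b * dthp_mgf_rec a t m (fun=> a 0%N)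
  <= dthp_mgf_rec a t (n + m) b.
Proof.
move=> adm0; elim: n b => [|n IH] b adm_b /=.
  by rewrite mul1r; apply: dthp_mgf_rec_le_base => // k; case: (adm_b k).
rewrite mulrDl -!mulrA; apply: ler_convex_comb; first exact: admissible_base0.
  by rewrite ler_wpM2l ?expR_ge0 ?IH //; apply: admissible_shift_base.
by rewrite IH //; apply: admissible_shift_base.
Qed.

End DTHPMgfBounds.

Theorem lemma4p7 (R : realType) (a : nat -> R)
    (ha_pos : forall i, 0 < a i)
    (ha_cvg : cvgn (series a))
    (ha_lt1 : limn (series a) < 1)
    (ha_mean : cvgn (series (fun i => i%:R * a i)))
    (t : R) (ht : 0 < t) :
  cvgn (fun n : nat => n%:R^-1 * ln (dthp_mgf a n t)).
Proof.
have a_ge0 i : 0 <= a i := ltW (ha_pos i).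
have t_ge0 := ltW ht.
have adm0 : admissible_base a (fun=> a 0%N).
  move=> k; split => //; apply/ltW/(le_lt_trans _ ha_lt1).
  have -> : a 0%N + \sum_(j < k) a j.+1 = series a k.+1.
    by rewrite /series /= big_mkord big_ord_recl.
  by apply: nondecreasing_cvgn_le => //; apply: nondecreasing_series.
pose f n := ln (dthp_mgf_rec a t n (fun=> a 0%N)).
have mgf_ge1 n := dthp_mgf_rec_ge1 a_ge0 t_ge0 n adm0.
have mgf_gt0 n := lt_le_trans ltr01 (mgf_ge1 n).
have -> : (fun n => n%:R^-1 * ln (dthp_mgf a n t)) = (fun n => n%:R^-1 * f n).
  by apply/funext => n; rewrite /f -dthp_mgf_fromE.
apply: (@superadditive_cvgn _ f t) => [n m | n | n].
- rewrite /f -lnM ?posrE // ler_ln ?posrE ?mulr_gt0 //.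
  exact: dthp_mgf_rec_supermul.
- exact: ln_ge0.
- by rewrite /f -[t * _]expRK ler_ln ?posrE ?expR_gt0 ?dthp_mgf_rec_le_expR.
Qed.
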